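(* Let $T=S_1\otimes S_3\otimes S_0+S_2\otimes S_0\otimes S_1+S_3\otimes S_2\otimes S_1+S_1\otimes S_2\otimes S_2+S_2\otimes S_1\otimes S_3+S_3\otimes S_3\otimes S_3$ and $$U_8=S_0\otimes S_0\otimes S_0+S_1\otimes S_3\otimes S_0+S_2\otimes S_0\otimes S_1+S_3\otimes S_2\otimes S_1+S_0\otimes S_1\otimes S_2+S_1\otimes S_2\otimes S_2+S_2\otimes S_1\otimes S_3+S_3\otimes S_3\otimes S_3.$$ Then $\mathrm{sr}(T)=6$ and $\mathrm{sr}(U_8)\ge 6$.
   Context: $S_0=\begin{bmatrix}1&0\\0&0\end{bmatrix}$, $S_1=\begin{bmatrix}0&1\\0&0\end{bmatrix}$, $S_2=\begin{bmatrix}0&0\\1&0\end{bmatrix}$, $S_3=\begin{bmatrix}0&0\\0&1\end{bmatrix}$. For a matrix $U$ on $\mathbb{C}^2\otimes\mathbb{C}^2\otimes\mathbb{C}^2$ (systems $A,B,C$), its Schmidt rank $\mathrm{sr}(U)$ is the least integer $r$ such that $U=\sum_{j=1}^r A_j\otimes B_j\otimes C_j$ with $A_j,B_j,C_j$ complex $2\times 2$ matrices (i.e. the tensor rank of $U$). *)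

(* Complex numbers = R[i] for R : realType (so R[i] is C). *)
From mathcomp Require Import all_boot all_algebra.
From mathcomp Require Import reals.
From mathcomp Require Import complex mxtens.
Set Implicit Arguments. Unset Strict Implicit. Unset Printing Implicit Defensive.
Import GRing.Theory.
Local Open Scope ring_scope.

Section Defs.
Variable K : pzRingType.

Definition S0 : 'M[K]_2 := \matrix_(i < 2, j < 2) ((i == 0 :> nat) && (j == 0 :> nat))%:R.
Definition S1 : 'M[K]_2 := \matrix_(i < 2, j < 2) ((i == 0 :> nat) && (j == 1 :> nat))%:R.
Definition S2 : 'M[K]_2 := \matrix_(i < 2, j < 2) ((i == 1 :> nat) && (j == 0 :> nat))%:R.
Definition S3 : 'M[K]_2 := \matrix_(i < 2, j < 2) ((i == 1 :> nat) && (j == 1 :> nat))%:R.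

Definition tens3 (A B C : 'M[K]_2) : 'M[K]_(2 * 2 * 2) := tensmx (tensmx A B) C.

Definition has_tensor_decomp (U : 'M[K]_(2 * 2 * 2)) (r : nat) : Prop :=
  exists (A B C : 'I_r -> 'M[K]_2), U = \sum_(j < r) tens3 (A j) (B j) (C j).

Definition schmidt_rank_is (U : 'M[K]_(2 * 2 * 2)) (n : nat) : Prop :=
  has_tensor_decomp U n /\ forall r, has_tensor_decomp U r -> (n <= r)%N.

Definition Tmx : 'M[K]_(2 * 2 * 2) :=
  tens3 S1 S3 S0 + tens3 S2 S0 S1 + tens3 S3 S2 S1
  + tens3 S1 S2 S2 + tens3 S2 S1 S3 + tens3 S3 S3 S3.

Definition U8 : 'M[K]_(2 * 2 * 2) :=
  tens3 S0 S0 S0 + tens3 S1 S3 S0 + tens3 S2 S0 S1 + tens3 S3 S2 S1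
  + tens3 S0 S1 S2 + tens3 S1 S2 S2 + tens3 S2 S1 S3 + tens3 S3 S3 S3.
End Defs.

From mathcomp Require Import all_boot all_algebra.
From mathcomp Require Import reals.
From mathcomp Require Import complex mxtens.
From mathcomp Require Import ring.
Set Implicit Arguments. Unset Strict Implicit. Unset Printing Implicit Defensive.
Import GRing.Theory.
Local Open Scope ring_scope.

(* An operator on C^2 (x) C^2 (x) C^2 is read as a 3-tensor t(p,q,s), where
   p, q, s range over the four entry positions (i,j) of a 2x2 matrix; a
   decomposition U = sum_j A_j (x) B_j (x) C_j is then exactly a trilinear
   decomposition t(p,q,s) = sum_j a_j(p) b_j(q) c_j(s) of this tensor.
   The upper bound sr(T) <= 6 is the defining sum of T.  The lower bound uses
   the substitution method on abstract trilinear decompositions: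
   - substitution: if t(p1,q0,s1) <> 0, one term of any decomposition can be
     absorbed into a correction t - mu(q) t(.,q0,.), lowering the length by 1;
   - flattening: an n x n identity block in t forces length >= n.
   Two substitutions (pivots at the B-positions of S_0 and S_1) followed by a
   4 x 4 identity block give the bound 6 for T.  The argument never reads the
   slice of the first factor at the position of S_0, and U_8 differs from T
   only by terms S_0 (x) _ (x) _, so the same bound holds for U_8. *)

Section TrilinearDecomposition.
Variables (F : fieldType) (P Q S : Type).

Definition trilinear_decomp (t : P -> Q -> S -> F) (r : nat) : Prop :=
  exists (a : 'I_r -> P -> F) (b : 'I_r -> Q -> F) (c : 'I_r -> S -> F),
    forall p q s, t p q s = \sum_(j < r) a j p * b j q * c j s.

Definition rank_at_least (t : P -> Q -> S -> F) (n : nat) : Prop :=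
  forall r, trilinear_decomp t r -> (n <= r)%N.

Lemma decomp0_eq0 (t : P -> Q -> S -> F) p q s :
  trilinear_decomp t 0 -> t p q s = 0.
Proof. by case=> a [b [c ->]]; rewrite big_ord0. Qed.

(* Substitution step: a term j0 with b_j0(q0) <> 0 exists because the
   q0-slice is nonzero; subtracting the multiple mu(q) = b_j0(q)/b_j0(q0) of
   that slice kills the term j0 and leaves r terms. *)
Lemma decomp_substitution (t : P -> Q -> S -> F) r (q0 : Q) p1 s1 :
  trilinear_decomp t r.+1 -> t p1 q0 s1 != 0 ->
  exists mu : Q -> F,
    trilinear_decomp (fun p q s => t p q s - mu q * t p q0 s) r.
Proof.
case=> a [b [c Dt]] t_nz.
have [j0 bj0_nz | b_q0_eq0] := pickP (fun j => b j q0 != 0); last first.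
  move: t_nz; rewrite Dt big1 ?eqxx // => j _.
  by move/negbFE/eqP: (b_q0_eq0 j) ->; rewrite mulr0 mul0r.
pose mu q := b j0 q / b j0 q0.
exists mu, (fun k => a (lift j0 k)),
  (fun k q => b (lift j0 k) q - mu q * b (lift j0 k) q0),
  (fun k => c (lift j0 k)) => p q s.
rewrite !Dt mulr_sumr -sumrB (bigD1_ord j0) //=.
have -> : a j0 p * b j0 q * c j0 s - mu q * (a j0 p * b j0 q0 * c j0 s) = 0.
  by rewrite /mu; field.
by rewrite add0r; apply: eq_bigr => k _; ring.
Qed.

Lemma rank_at_least_substitution (t : P -> Q -> S -> F) n (q0 : Q) p1 s1 :
  t p1 q0 s1 != 0 ->
  (forall mu : Q -> F, rank_at_least (fun p q s => t p q s - mu q * t p q0 s) n) ->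
  rank_at_least t n.+1.
Proof.
move=> t_nz corrected_ge [|r] Dt.
  by move: t_nz; rewrite (decomp0_eq0 _ _ _ Dt) eqxx.
have [mu Dmu] := decomp_substitution Dt t_nz.
exact: corrected_ge Dmu.
Qed.

(* Flattening: if t restricted to the grid (f k, g k) x h l is the n x n
   identity, the (P x Q) x S flattening has rank >= n, hence so does t. *)
Lemma rank_at_least_identity_block (t : P -> Q -> S -> F) n
    (f : 'I_n -> P) (g : 'I_n -> Q) (h : 'I_n -> S) :
  (forall k l, t (f k) (g k) (h l) = (k == l)%:R) -> rank_at_least t n.
Proof.
move=> t_id r [a [b [c Dt]]].
pose X := \matrix_(k < n, j < r) (a j (f k) * b j (g k)).
pose Y := \matrix_(j < r, l < n) c j (h l).
have XY : X *m Y = 1%:M.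
  by apply/matrixP=> k l; rewrite !mxE -t_id Dt; apply: eq_bigr => j _; rewrite !mxE.
have := mxrankM_maxl X Y; rewrite XY mxrank1 => n_le_rkX.
exact: leq_trans n_le_rkX (rank_leq_col X).
Qed.

End TrilinearDecomposition.

Section OperatorTensor.
Variable F : fieldType.

Definition op_tensor (M : 'M[F]_(2 * 2 * 2)) (p q s : 'I_2 * 'I_2) : F :=
  M (mxtens_index (mxtens_index (p.1, q.1), s.1))
    (mxtens_index (mxtens_index (p.2, q.2), s.2)).

Lemma op_tensorD M N p q s :
  op_tensor (M + N) p q s = op_tensor M p q s + op_tensor N p q s.
Proof. by rewrite /op_tensor mxE. Qed.

Lemma op_tensor_tens3 (A B C : 'M[F]_2) p q s :
  op_tensor (tens3 A B C) p q s = A p.1 p.2 * B q.1 q.2 * C s.1 s.2.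
Proof. by rewrite /op_tensor /tens3 !tensmxE. Qed.

Lemma trilinear_decomp_op M r :
  has_tensor_decomp M r -> trilinear_decomp (op_tensor M) r.
Proof.
case=> A [B [C ->]]; exists (fun j p => A j p.1 p.2), (fun j q => B j q.1 q.2),
  (fun j s => C j s.1 s.2) => p q s.
by rewrite /op_tensor summxE; apply: eq_bigr => j _; rewrite -op_tensor_tens3.
Qed.

Definition pos0 : 'I_2 * 'I_2 := (ord0, ord0).
Definition pos1 : 'I_2 * 'I_2 := (ord0, ord_max).
Definition pos2 : 'I_2 * 'I_2 := (ord_max, ord0).
Definition pos3 : 'I_2 * 'I_2 := (ord_max, ord_max).

(* The 4 x 4 identity block of T after the two substitutions: rows are the
   pairs (S_1,S_2), (S_1,S_3), (S_3,S_2), (S_3,S_3) of the first two factors,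
   columns the third-factor positions of S_2, S_0, S_1, S_3. *)
Definition block_row1 (k : 'I_4) := if (k < 2)%N then pos1 else pos3.
Definition block_row2 (k : 'I_4) := if odd k then pos3 else pos2.
Definition block_col (l : 'I_4) :=
  match nat_of_ord l with 0 => pos2 | 1 => pos0 | 2 => pos1 | _ => pos3 end.

(* The abstract lower bound: pivots t(S_2,S_0,S_1) and, after the first
   correction, t(S_2,S_1,S_3) (unchanged since t(S_2,S_0,S_3) = 0); the
   corrections vanish on the identity block since the S_0- and S_1-slices
   of the second factor do. *)
Lemma rank_at_least6 (t : _ -> _ -> _ -> F) :
  t pos2 pos0 pos1 = 1 -> t pos2 pos0 pos3 = 0 -> t pos2 pos1 pos3 = 1 ->
  (forall k l, t (block_row1 k) pos0 (block_col l) = 0) ->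
  (forall k l, t (block_row1 k) pos1 (block_col l) = 0) ->
  (forall k l, t (block_row1 k) (block_row2 k) (block_col l) = (k == l)%:R) ->
  rank_at_least t 6.
Proof.
move=> pivot1 t203 pivot2 slice0 slice1 block.
apply: (rank_at_least_substitution (q0 := pos0) (p1 := pos2) (s1 := pos1)).
  by rewrite pivot1 oner_neq0.
move=> mu; apply: (rank_at_least_substitution (q0 := pos1) (p1 := pos2) (s1 := pos3)).
  by rewrite pivot2 t203 mulr0 subr0 oner_neq0.
move=> nu; apply: (rank_at_least_identity_block
  (f := block_row1) (g := block_row2) (h := block_col)) => k l.
by rewrite slice0 slice1 block !(mulr0, subr0).
Qed.

End OperatorTensor.

Ltac eval_entry := rewrite /Tmx !op_tensorD !op_tensor_tens3 /S0 /S1 /S2 /S3 !mxE /=;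
  rewrite ?mulr1n ?mulr0n ?mul1r ?mulr1 ?mul0r ?mulr0 ?addr0 ?add0r.

Lemma T_like_rank_at_least6 (F : fieldType) (M : 'M[F]_(2 * 2 * 2)) :
  (forall p q s, p != pos0 -> op_tensor M p q s = op_tensor (Tmx F) p q s) ->
  forall r, has_tensor_decomp M r -> (6 <= r)%N.
Proof.
move=> agree r /trilinear_decomp_op DM; apply: (rank_at_least6 _ _ _ _ _ _ DM).
1-3: by rewrite agree //; eval_entry.
all: by move=> [[|[|[|[|//]]]] ?] [[|[|[|[|//]]]] ?]; rewrite agree //; eval_entry.
Qed.

Lemma S0_off_pos0 (F : fieldType) (p : 'I_2 * 'I_2) : p != pos0 -> S0 F p.1 p.2 = 0.
Proof.
case: p => i j p_neq0; rewrite mxE /=.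
case: (boolP ((i == 0 :> nat) && (j == 0 :> nat))) => [/andP[/eqP i0 /eqP j0] | _] //.
by case/eqP: p_neq0; congr pair; apply: val_inj.
Qed.

Lemma U8_split (F : fieldType) :
  U8 F = Tmx F + (tens3 (S0 F) (S0 F) (S0 F) + tens3 (S0 F) (S1 F) (S2 F)).
Proof. by apply/matrixP=> i j; rewrite /U8 /Tmx /tens3 !mxE; ring. Qed.

Lemma U8_off_pos0 (F : fieldType) p q s :
  p != pos0 -> op_tensor (U8 F) p q s = op_tensor (Tmx F) p q s.
Proof.
move=> /S0_off_pos0 S0p.
by rewrite U8_split !op_tensorD !op_tensor_tens3 S0p !mul0r !addr0.
Qed.

Lemma T_decomp6 (K : pzRingType) : has_tensor_decomp (Tmx K) 6.
Proof.
exists (fun j : 'I_6 => nth 0 [:: S1 K; S2 K; S3 K; S1 K; S2 K; S3 K] j),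
  (fun j : 'I_6 => nth 0 [:: S3 K; S0 K; S2 K; S2 K; S1 K; S3 K] j),
  (fun j : 'I_6 => nth 0 [:: S0 K; S1 K; S1 K; S2 K; S3 K; S3 K] j).
by rewrite !big_ord_recr big_ord0 /= add0r.
Qed.

Theorem lemma4 (R : realType) :
  schmidt_rank_is (Tmx R[i]) 6 /\
  (forall r : nat, has_tensor_decomp (U8 R[i]) r -> (6 <= r)%N).
Proof.
split; last exact: T_like_rank_at_least6 (@U8_off_pos0 _).
by split; [exact: T_decomp6 | exact: T_like_rank_at_least6].
Qed.
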